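(* Let $p$ be an odd prime and $k\ge1$. For $0\le l<p^k$, $$\mathcal M_{V_{2,l}}=\begin{cases}\frac{p-1}{2}(2p+1), & l<\frac{p^k-1}{2},\\[2pt] \frac{p-1}{2}(2p-1), & l\ge\frac{p^k-1}{2}.\end{cases}$$
   Context: Fix an odd prime $p$ and an integer $k\ge 0$. For integers $0\le i<n$ write $\lambda(n,i)=(n-i,1^i)$ for the hook partition of $n$ with $n-i$ boxes in its first row and $i$ further boxes in its first column. If $\mu=\lambda(n',i')$ is obtained from $\lambda(n,i)$ by appending $m=(n'-i')-(n-i)\ge 0$ boxes to the first row and $n''=i'-i\ge 0$ boxes to the first column, we say $\mu$ is obtained by adding the block $B_{m,n''}$ ($m$ horizontal nodes, $n''$ vertical nodes). Put $x_s=p^k(sp-(s+1))$. The relevant part (''column $k$'') of the $p$-Bratteli diagram is the graded directed graph with vertices: on floor $2k+1$, $S_i=\lambda(p^k(p-1),i)$ for $0\le i<p^k(p-1)$; on floor $2(k+s)$ ($s\ge1$), $V_{s,l}=\lambda\big(p^k(2sp-(2s+1)),\,x_s+l\big)$ for $0\le l<p^k$; on floor $2(k+s)-1$ ($s\ge2$), $W_{s,l'}=\lambda\big(p^k((2s-1)p-2s),\,x_{s-1}+l'\big)$ for $0\le l'<p^{k+1}$; and edges, each labelled by the block added: (E1) $S_i\to V_{1,l}$ exactly when $i=p^kt+l$ with $0\le t\le p-2$, block $B_{p^kt,\,p^k(p-2-t)}$; (E2) for $s\ge2$, $0\le l<p^k$, $0\le\beta\le p-1$: $V_{s-1,l}\to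 W_{s,pl+\beta}$, block $B_{p^k(p-1)-((p-1)l+\beta),\,(p-1)l+\beta}$; (E3) for $s\ge 2$, $0\le l'<p^{k+1}$ and $t=\lfloor l'/p^k\rfloor$: $W_{s,l'}\to V_{s,l'-p^kt}$, block $B_{p^kt,\,p^k(p-1-t)}$. A path ending at a vertex $v$ is a sequence of edges starting at some $S_i$ and going up one floor at a time to $v$ ($S_i\to V_{1,\cdot}\to W_{2,\cdot}\to V_{2,\cdot}\to W_{3,\cdot}\to\cdots\to v$); $\mathcal P(v)$ is the set of all paths ending at $v$. The blocks of a path are numbered $B^2,B^3,\dots,B^N$: $B^2$ is the block of the edge leaving $S_i$, and for $j\ge2$, $B^{2j-1}$ is the block of the edge into $W_{j,\cdot}$ and $B^{2j}$ the block of the edge into $V_{j,\cdot}$. Write $B^j=B_{m_j,n_j}$. Descents: $1\in\mathrm{Des}(P)$ iff $m_2=p^kt$ with $0\le t<\frac{p-1}{2}$; $2\notin\mathrm{Des}(P)$; for $3\le j<N$, $j\in\mathrm{Des}(P)$ iff $m_j>m_{j+1}$ and $n_j<n_{j+1}$. $\mathrm{des}(P)=|\mathrm{Des}(P)|$. The $p^k$-Fibonacci number of a vertex $v$ is $\mathcal M_v=\sum_{P\in\mathcal P(v)}\mathrm{des}(P)$. *)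

From mathcomp Require Import all_boot.

Set Implicit Arguments.
Unset Strict Implicit.
Unset Printing Implicit Defensive.

(* Column k of the p-Bratteli diagram.  Vertices are represented by their
   index: S_i by i, V_{s,l} by l, W_{s,l'} by l' (the floor is determined by
   the position in a path).  Between two vertices there is at most one edge,
   so a path is determined by its sequence of vertices. *)

(* (E1)  S_i -> V_{1,l} *)
Definition edge1 (p k i l : nat) : bool :=
  [&& i < p ^ k * (p - 1), l < p ^ k &
      [exists t : 'I_(p - 1), i == p ^ k * t + l]].

(* (E2)  V_{s-1,l} -> W_{s,w} *)
Definition edge2 (p k l w : nat) : bool :=
  [&& l < p ^ k, w < p ^ k.+1 & [exists b : 'I_p, w == p * l + b]].

(* (E3)  W_{s,w} -> V_{s,l} *)
Definition edge3 (p k w l : nat) : bool :=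
  [&& w < p ^ k.+1, l < p ^ k & l == w - p ^ k * (w %/ p ^ k)].

(* A path ending at V_{s,l}, as the vertex-index sequence
   x = [:: i; l_1; w_2; l_2; w_3; l_3; ...; w_s; l_s]  (size 2s), where
   x_0 = S index, x_(2j-1) = V_j index, x_(2j) = W_(j+1) index. *)
Definition is_path (p k s l : nat) (x : seq nat) : bool :=
  [&& 0 < s, size x == 2 * s,
      edge1 p k (nth 0 x 0) (nth 0 x 1),
      all (fun j => edge2 p k (nth 0 x (2 * j - 1)) (nth 0 x (2 * j))
                    && edge3 p k (nth 0 x (2 * j)) (nth 0 x (2 * j + 1)))
          (iota 1 (s - 1))
    & nth 0 x (2 * s - 1) == l].

(* The block B^J = B_{m_J, n_J} (2 <= J <= N = size x) is the label of the
   edge from x_(J-2) to x_(J-1). *)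
Definition block (p k : nat) (x : seq nat) (J : nat) : nat * nat :=
  let a := nth 0 x (J - 2) in
  let b := nth 0 x (J - 1) in
  if J == 2 then
    let t := a %/ p ^ k in (p ^ k * t, p ^ k * (p - 2 - t))
  else if odd J then
    let beta := b - p * a in
    (p ^ k * (p - 1) - ((p - 1) * a + beta), (p - 1) * a + beta)
  else
    let t := a %/ p ^ k in (p ^ k * t, p ^ k * (p - 1 - t)).

Definition mblk p k x J := (block p k x J).1.
Definition nblk p k x J := (block p k x J).2.

Definition in_Des (p k : nat) (x : seq nat) (j : nat) : bool :=
  if j == 1 then 2 * (nth 0 x 0 %/ p ^ k) < p - 1
  else if j == 2 then false
  else [&& 3 <= j, j < size x,
           mblk p k x j > mblk p k x j.+1 & nblk p k x j < nblk p k x j.+1].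

Definition Des (p k : nat) (x : seq nat) : seq nat :=
  [seq j <- iota 1 (size x - 1) | in_Des p k x j].

Definition des (p k : nat) (x : seq nat) : nat := size (Des p k x).

(* p^k-Fibonacci number of V_{s,l}: sum of des over all paths ending at
   V_{s,l}.  All vertex indices are < p^(k+1), so enumerating (2s)-tuples of
   'I_(p^(k+1)) covers every path exactly once. *)
Definition fibV (p k s l : nat) : nat :=
  \sum_(x : (2 * s).-tuple 'I_(p ^ k.+1) | is_path p k s l (map val x))
     des p k (map val x).

From mathcomp Require Import all_boot zify.

(* A path ending at V_{2,l} is determined by the integers a < p-1 and b < p
   labelling its first and third blocks: its W-vertex is w = l + p^k b, its
   V_1-vertex is w div p and its S-vertex is p^k a + w div p.  Position 1 is a
   descent iff a < (p-1)/2, position 2 never is, and since m_3 + n_3 = m_4 + n_4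
   = p^k (p-1), position 3 is a descent iff n_3 + p^k b < p^k (p-1).  Writing
   p = 2h+1 and n_3 = 2h(l div p) + (l mod p) + 2h p^(k-1) b, this inequality
   is decided by comparing b with h, and in the boundary case b = h it reduces
   to l < (p^k - 1)/2.  Summing over the p(p-1) pairs (a, b) gives the formula. *)

Lemma divn_mulDl_small d a x : x < d -> (d * a + x) %/ d = a.
Proof. by move=> x_lt; rewrite mulnC divnMDl ?divn_small ?addn0 //; lia. Qed.

Lemma oddE n : odd n -> n = n./2.*2.+1.
Proof. by move=> n_odd; rewrite -[LHS]odd_double_half n_odd. Qed.

Lemma sum_tuples_codom m n (P : pred (seq nat)) (F : seq nat -> nat)
    (I : finType) (f : I -> seq nat) :
  injective f ->
  (forall s, [&& size s == n, all (fun x => x < m) s & P s] = (s \in codom f)) ->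
  \sum_(x : n.-tuple 'I_m | P (map val x)) F (map val x) = \sum_(i : I) F (f i).
Proof.
move=> f_inj codomE.
rewrite -(big_image _ _ (fun x : n.-tuple 'I_m => map val x) (fun x => P (map val x))).
rewrite -(big_image _ _ f predT); apply: perm_big; apply: uniq_perm.
- by rewrite map_inj_uniq ?enum_uniq // => x y /(inj_map val_inj)/val_inj.
- by rewrite map_inj_uniq ?enum_uniq.
move=> s; rewrite -codomE; apply/imageP/and3P => [[x Px ->]|[/eqP sz_s lt_s Ps]].
  by rewrite size_map size_tuple all_map; split=> //; apply/allP => i _ /=.
have ordsK : map val (pmap insub s : seq 'I_m) = s.
  rewrite (pmap_filter (@insubK _ _ _)); apply/all_filterP.
  by rewrite (eq_all (@isSome_insub _ _ _)).
have sz : size (pmap insub s : seq 'I_m) == n by rewrite -(size_map val) ordsK sz_s.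
by exists (Tuple sz); rewrite ?unfold_in /= ordsK.
Qed.

Lemma sum_ord_lt n c : \sum_(i < n) (i < c) = minn c n.
Proof.
elim: n => [|n IHn]; first by rewrite big_ord0 minn0.
by rewrite big_ord_recr /= IHn; case: (ltnP n c) => ? /=; lia.
Qed.

Lemma sum_pair_ord_lt m n c d :
  \sum_(ab : 'I_m * 'I_n) ((ab.1 < c) + (ab.2 < d)) = minn c m * n + m * minn d n.
Proof.
rewrite -(pair_bigA _ (fun (a : 'I_m) (b : 'I_n) => (a < c) + (b < d))) /=.
under eq_bigr do rewrite big_split /= sum_nat_const card_ord sum_ord_lt.
rewrite big_split /= -big_distrr sum_ord_lt sum_nat_const card_ord.
by congr (_ + _); apply: mulnC.
Qed.

Lemma half_threshold h q a r : 0 < h -> a <= q.*2 -> r <= h.*2 ->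
  (h.*2 * a + r < h * q.*2.+1) = (h.*2.+1 * a + r < h * q.*2.+1 + q).
Proof.
move=> h_gt0 a_le r_le; case: (ltngtP a q) => [a_lt|a_gt|->].
- have : h.*2 * a <= h.*2 * q.-1 by rewrite leq_mul2l; lia.
  nia.
- have : h.*2 * q.+1 <= h.*2 * a by rewrite leq_mul2l; lia.
  nia.
- nia.
Qed.

Lemma descent_threshold_double h Q n b : 0 < h -> 0 < Q -> n <= h.*2 * Q -> b <= h.*2 ->
  (n + h.*2 * Q * b + h.*2.+1 * Q * b < h.*2.+1 * Q * h.*2) = (b < h + (n < h * Q)).
Proof.
move=> h_gt0 Q_gt0 n_le b_le.
have -> : n + h.*2 * Q * b + h.*2.+1 * Q * b = n + Q * b * ((4 * h).+1) by lia.
have -> : h.*2.+1 * Q * h.*2 = Q * h * (4 * h) + Q * h.*2 by lia.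
case: (ltngtP b h) => [b_lt|b_gt|->].
- have : Q * b <= Q * h.-1 by rewrite leq_mul2l; lia.
  nia.
- have : Q * h.+1 <= Q * b by rewrite leq_mul2l; lia.
  nia.
- nia.
Qed.

Lemma descent_threshold p Q a r b : odd p -> 1 < p -> odd Q ->
    a < Q -> r < p -> b < p ->
  ((p - 1) * (a + Q * b) + r + p * Q * b < p * Q * (p - 1))
    = (b < (p - 1) %/ 2 + (a * p + r < (p * Q - 1) %/ 2)).
Proof.
move=> /oddE p_eq p_gt1 /oddE Q_eq a_lt r_lt b_lt.
move: p./2 (Q./2) p_eq Q_eq => h q p_eq Q_eq; subst p.
have h_gt0 : 0 < h by lia.
have -> : h.*2.+1 - 1 = h.*2 by lia.
have -> : h.*2 %/ 2 = h by lia.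
have -> : (h.*2.+1 * Q - 1) %/ 2 = h * Q + q by rewrite Q_eq; nia.
have -> : a * h.*2.+1 = h.*2.+1 * a by apply: mulnC.
have a_le : a <= q.*2 by lia.
have r_le : r <= h.*2 by lia.
rewrite Q_eq -half_threshold // -Q_eq.
rewrite -(descent_threshold_double h Q (h.*2 * a + r) b) //.
- by congr (_ < _); lia.
- by rewrite Q_eq.
- by nia.
Qed.

Lemma des_path4 p k i v w l : des p k [:: i; v; w; l] =
  (2 * (i %/ p ^ k) < p - 1) +
  [&& p ^ k * (w %/ p ^ k) < p ^ k * (p - 1) - ((p - 1) * v + (w - p * v))
    & (p - 1) * v + (w - p * v) < p ^ k * (p - 1 - w %/ p ^ k)].
Proof.
rewrite /des /Des /= /in_Des /= /mblk /nblk /block /=.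
by case: (2 * _ < _); case: (_ && _).
Qed.

Section PathsToV2.

Variables p k l : nat.
Hypotheses (p_odd : odd p) (p_gt1 : 1 < p) (k_gt0 : 0 < k) (l_lt : l < p ^ k).

Local Notation P := (p ^ k).
Local Notation Q := (p ^ k.-1).

Definition V2path a b : seq nat :=
  let w := l + P * b in [:: P * a + w %/ p; w %/ p; w; l].

Let P_eq : P = p * Q. Proof. by rewrite -expnS prednK. Qed.
Let Q_gt0 : 0 < Q. Proof. by rewrite expn_gt0; lia. Qed.
Let P_gt0 : 0 < P. Proof. by rewrite expn_gt0; lia. Qed.

Lemma V2_divp b : (l + P * b) %/ p = l %/ p + Q * b.
Proof. by rewrite P_eq -mulnA mulnC addnC divnMDl; lia. Qed.

Lemma V2_modp b : l + P * b - p * ((l + P * b) %/ p) = l %% p.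
Proof. by rewrite V2_divp P_eq; have := divn_eq l p; lia. Qed.

Let l_divp_lt : l %/ p < Q.
Proof. by rewrite ltn_divLR 1?mulnC -?P_eq //; lia. Qed.

Lemma V2_divp_lt {b} : b < p -> (l + P * b) %/ p < P.
Proof. by move=> b_lt; rewrite V2_divp P_eq; nia. Qed.

Lemma V2_lt {b} : b < p -> l + P * b < p ^ k.+1.
Proof. by move=> b_lt; rewrite expnS mulnC; nia. Qed.

Lemma V2_divP b : (l + P * b) %/ P = b.
Proof. by rewrite addnC divn_mulDl_small. Qed.

Lemma V2path_inj a b a' b' : b < p -> b' < p ->
  V2path a b = V2path a' b' -> a = a' /\ b = b'.
Proof.
rewrite /V2path => b_lt b'_lt [eq0 _ eq2].
have eq_b : b = b' by rewrite -(V2_divP b) eq2 V2_divP.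
subst b'; split=> //.
by apply/eqP; rewrite -(eqn_pmul2l P_gt0); apply/eqP; lia.
Qed.

Lemma is_path_V2P x :
  reflect (exists a b, [/\ a < p - 1, b < p & x = V2path a b]) (is_path p k 2 l x).
Proof.
apply: (iffP idP) => [|[a [b [a_lt b_lt ->]]]].
  case: x => [|x0 [|x1 [|x2 [|x3 []]]]] //.
  rewrite /is_path /edge1 /edge2 /edge3 /= andbT.
  move=> /and3P [/and3P [_ _ /existsP [t /eqP x0E]]].
  move=> /andP [/and3P [_ x2_lt /existsP [c /eqP x2E]] /and3P [_ _ /eqP x3E]] /eqP x3l.
  have x2_divP : x2 %/ P < p.
    by move: x2_lt; rewrite expnS ltn_divLR // mulnC.
  have x2_eq : l + P * (x2 %/ P) = x2 by have := divn_eq x2 P; lia.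
  have x2_divp : x2 %/ p = x1 by rewrite x2E divn_mulDl_small.
  by exists t, (x2 %/ P); split=> //; rewrite /V2path x2_eq x2_divp -x0E x3l.
have w_divp_lt := V2_divp_lt b_lt.
rewrite /is_path /edge1 /edge2 /edge3 /= w_divp_lt V2_lt // V2_divP l_lt /= andbT.
rewrite addnK !eqxx !andbT; apply/andP; split; first (apply/andP; split).
- by nia.
- by apply/existsP; exists (Ordinal a_lt).
- apply/existsP; exists (Ordinal (ltn_pmod (l + P * b) (ltnW p_gt1))).
  by rewrite /= {1}(divn_eq (l + P * b) p) mulnC.
Qed.

Lemma des_V2path a b : b < p ->
  des p k (V2path a b) = (a < (p - 1) %/ 2) + (b < (p - 1) %/ 2 + (l < (P - 1) %/ 2)).
Proof.
move=> b_lt; rewrite /V2path des_path4 divn_mulDl_small ?V2_divp_lt // V2_divP V2_modp.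
congr (_ + _); first by congr nat_of_bool; apply/idP/idP; lia.
set n := (p - 1) * _ + _.
have -> : [&& P * b < P * (p - 1) - n & n < P * (p - 1 - b)] = (n + P * b < P * (p - 1)).
  by rewrite (mulnBr P (p - 1) b); apply/andP/idP => [[]|]; lia.
rewrite /n V2_divp P_eq descent_threshold ?oddX ?p_odd ?orbT ?ltn_pmod ?(ltnW p_gt1) //.
by rewrite -divn_eq.
Qed.

Lemma V2path_lt a b : a < p - 1 -> b < p -> all (fun v => v < p ^ k.+1) (V2path a b).
Proof.
move=> a_lt b_lt; have w_divp_lt := V2_divp_lt b_lt.
have Pa_lt : P * a.+1 <= p ^ k.+1 by rewrite expnS mulnC leq_mul2r; lia.
have P_lt : P < p ^ k.+1 by rewrite ltn_exp2l.
by rewrite /= V2_lt //= andbT; apply/and3P; split; have := mulnS P a; lia.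
Qed.

Lemma fibV2 :
  fibV p k 2 l = (p - 1) %/ 2 * p + (p - 1) * ((p - 1) %/ 2 + (l < (P - 1) %/ 2)).
Proof.
rewrite /fibV (@sum_tuples_codom _ _ _ _ _ (fun ab : 'I_(p - 1) * 'I_p => V2path ab.1 ab.2)).
- rewrite (eq_bigr _ (fun (ab : 'I_(p - 1) * 'I_p) _ => des_V2path ab.1 ab.2 (ltn_ord ab.2))).
  by rewrite sum_pair_ord_lt; congr (_ * _ + _ * _); lia.
- move=> [a b] [a' b'] /= /V2path_inj [] // a_eq b_eq.
  by congr (_, _); apply: val_inj.
move=> x; apply/and3P/codomP => [[_ _ /is_path_V2P [a [b [a_lt b_lt ->]]]]|[[a b] ->]].
  by exists (Ordinal a_lt, Ordinal b_lt).
split; [by [] | exact: V2path_lt | by apply/is_path_V2P; exists a, b].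
Qed.

End PathsToV2.

Theorem mainTheorem4 (p k l : nat) :
  prime p -> odd p -> 1 <= k -> l < p ^ k ->
  fibV p k 2 l =
    (if l < (p ^ k - 1) %/ 2 then (p - 1) %/ 2 * (2 * p + 1)
     else (p - 1) %/ 2 * (2 * p - 1)).
Proof.
move=> p_prime p_odd k_gt0 l_lt; rewrite fibV2 ?prime_gt1 //.
have [h ->] : exists h, p = h.*2.+1 by exists p./2; exact: oddE.
have -> : (h.*2.+1 - 1) %/ 2 = h by lia.
by case: (l < _); lia.
Qed.
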